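(* For every integer $n\ge 1$, $(n-1) P_{n-1} P_{n}^2=2 P_{n+1} P_{n}^2+(n-1) P_{2 n} P_{n}+(n+1) P_{n+1} (P_{n+1}^2-P_{2 n+1})$, where $P_k$ denotes the $k$-th Pell number.
   Context: The Pell numbers are defined by $P_0=0$, $P_1=1$, $P_k=2P_{k-1}+P_{k-2}$ for $k\ge 2$. *)

From mathcomp Require Import all_boot all_algebra.
Set Implicit Arguments. Unset Strict Implicit. Unset Printing Implicit Defensive.

Fixpoint pell (k : nat) : nat :=
  match k with
  | 0 => 0
  | 1 => 1
  | (k'.+1 as k1).+1 => 2 * pell k1 + pell k'
  end.

From mathcomp Require Import all_boot all_algebra.
From mathcomp Require Import zify ring.
Import GRing.Theory.
Local Open Scope ring_scope.

(* Write a = P_{n-1}, b = P_n and c = P_{n+1} = 2b + a.  The doubling formulas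
   P_{2n} = b (a + c) and P_{2n+1} = b^2 + c^2 turn the last summand into
   -(n+1) c b^2, after which both sides are the same polynomial in n, a, b. *)

Lemma pellSS k : pell k.+2 = (2 * pell k.+1 + pell k)%N.
Proof. by []. Qed.

Lemma pell_addS m n : pell (m + n).+1 = (pell m.+1 * pell n.+1 + pell m * pell n)%N.
Proof.
elim: m n => [|m IHm] n; first by rewrite add0n mul1n mul0n addn0.
by rewrite addSnnS IHm !pellSS; lia.
Qed.

Lemma pell_doubleS n : pell (2 * n).+1 = (pell n.+1 ^ 2 + pell n ^ 2)%N.
Proof. by rewrite mul2n -addnn pell_addS. Qed.

Lemma pell_double n : pell (2 * n) = (pell n * (pell n.+1 + pell n.-1))%N.
Proof.
case: n => [//|n]; rewrite (_ : 2 * n.+1 = (n + n.+1).+1)%N ?pell_addS /=; lia.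
Qed.

Theorem proposition7p5 (n : nat) : (1 <= n)%N ->
  ((n%:Z - 1) * (pell n.-1)%:Z * (pell n)%:Z ^+ 2 =
   2 * (pell n.+1)%:Z * (pell n)%:Z ^+ 2
   + (n%:Z - 1) * (pell (2 * n))%:Z * (pell n)%:Z
   + (n%:Z + 1) * (pell n.+1)%:Z * ((pell n.+1)%:Z ^+ 2 - (pell (2 * n).+1)%:Z))%R.
Proof.
case: n => [//|n] _.
rewrite pell_double pell_doubleS pellSS /=.
move: (pell n) (pell n.+1) => a b.
rewrite !PoszD !PoszM -!natz.
ring.
Qed.
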